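(* Let $\Gamma$ be a weighted digraph with vertex set $\{1,\dots,n\}$, $n>1$, without loops and with strictly positive arc weights, with Laplacian matrix $L$ and in-forest dimension $d$. For every $\lambda\neq0$, $$\operatorname{adj}(\lambda I+L)=\sum_{k=0}^{n-d}s'_{n-d-k}(\lambda)\,(-L/\lambda)^k,\qquad\text{where } s'_i(\lambda)=\sum_{j=0}^{i}\sigma_j\lambda^{n-j-1},\ i=0,\dots,n-d.$$
   Context: $W=(w_{ij})$ is the matrix of arc weights ($w_{ij}>0$ iff there is an arc $i\to j$, else $0$). The Laplacian $L=(\ell_{ij})$: $\ell_{ij}=-w_{ij}$ for $j\ne i$, $\ell_{ii}=\sum_{k\ne i}w_{ik}$. The weight of a subgraph is the product of its arc weights (1 if no arcs); the weight of a set of subgraphs is the sum of their weights. A converging tree is a weakly connected digraph with one vertex (the root) of outdegree 0 and all others of outdegree 1; an in-forest is a spanning subgraph of $\Gamma$ whose weak components are converging trees. The in-forest dimension $d$ is the minimal number of trees in an in-forest. $\sigma_k$ is the total weight of in-forests of $\Gamma$ with $k$ arcs. $\operatorname{adj}A$ is the transposed matrix of cofactors. *)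

From HB Require Import structures.
From mathcomp Require Import all_boot all_order all_algebra.
Set Implicit Arguments. Unset Strict Implicit. Unset Printing Implicit Defensive.
Import Order.TTheory GRing.Theory Num.Theory.
Local Open Scope ring_scope.

Section Digraph.
Variables (R : realFieldType) (n : nat) (W : 'M[R]_n).

Definition is_arc (a : 'I_n * 'I_n) : bool := 0 < W a.1 a.2.

Definition laplacian : 'M[R]_n :=
  \matrix_(i, j) (if i == j then \sum_(k | k != i) W i k else - W i j).

(* a subgraph (spanning) is given by its arc set F *)
Definition outdeg (F : {set 'I_n * 'I_n}) (i : 'I_n) : nat :=
  #|[set a in F | a.1 == i]|.

Definition weak_adj (F : {set 'I_n * 'I_n}) : rel 'I_n :=
  fun u v => ((u, v) \in F) || ((v, u) \in F).

(* F is an in-forest: a spanning subgraph of Gamma whose weak components are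
   converging trees, i.e. every weak component has exactly one vertex (root)
   of outdegree 0 and all its other vertices have outdegree 1. *)
Definition is_inforest (F : {set 'I_n * 'I_n}) : bool :=
  [forall a in F, is_arc a] &&
  [forall x, (outdeg F x <= 1)%N &&
     (#|[set y | connect (weak_adj F) x y & outdeg F y == 0%N]| == 1%N)].

(* number of trees of an in-forest = number of roots *)
Definition ntrees (F : {set 'I_n * 'I_n}) : nat :=
  #|[set i | outdeg F i == 0%N]|.

Definition sg_weight (F : {set 'I_n * 'I_n}) : R := \prod_(a in F) W a.1 a.2.

Definition sigma (k : nat) : R :=
  \sum_(F : {set 'I_n * 'I_n} | is_inforest F && (#|F| == k)) sg_weight F.

Definition inforest_dim : nat :=
  \big[minn/n]_(F : {set 'I_n * 'I_n} | is_inforest F) ntrees F.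

Definition s' (i : nat) (lam : R) : R :=
  \sum_(j < i.+1) sigma j * lam ^+ (n - j - 1).

End Digraph.

From HB Require Import structures.
From mathcomp Require Import all_boot all_order all_algebra.
From mathcomp Require Import fingroup perm zify.
Set Implicit Arguments. Unset Strict Implicit. Unset Printing Implicit Defensive.
Import Order.TTheory GRing.Theory Num.Theory.
Local Open Scope ring_scope.

(* Write A(x) = x I + L.  Row r of A(x) is x e_r + sum_k w_rk (e_r - e_k), so
   expanding det A(x) multilinearly over the rows gives one term per map g
   choosing for every vertex either "root" or one out-neighbour; the
   determinant of the rows e_r - e_(g r) is 1 when g has no cycle and 0
   otherwise.  Hence the coefficient of x^t in det A(x) is sigma_(n-t), and the
   same expansion of the cofactors writes the coefficient P_t of x^t in
   adj A(x) as a sum over in-forests with t + 1 trees, so that P_t = 0 for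
   t + 1 < d.  Comparing coefficients in A(x) adj A(x) = det A(x) I gives
   P_t + L P_(t+1) = sigma_(n-t-1) I, whence
   P_(n-1-m) = sum_(j <= m) sigma_j (-L)^(m-j); evaluating at x = lambda and
   collecting powers of L yields the formula. *)

(* A map [g] encodes the subgraph with an arc [i -> k] whenever [g i = Some k];
   the vertices with [g i = None] are its roots. *)
Section SuccessorMaps.
Variable n : nat.
Implicit Types (g : {ffun 'I_n -> option 'I_n}) (i k x y : 'I_n).

Definition succ g (o : option 'I_n) : option 'I_n := if o is Some i then g i else None.
Definition reaches_root g i := fconnect (succ g) (Some i) None.
Definition acyclic g := [forall i, reaches_root g i].

Lemma iter_succ_None g m : iter m (succ g) None = None.
Proof. by elim: m => //= m ->. Qed.

Lemma reaches_rootP g i :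
  reflect (exists m, iter m (succ g) (Some i) = None) (reaches_root g i).
Proof.
apply: (iffP idP) => [r_i | [m i_m]]; last by rewrite /reaches_root -i_m fconnect_iter.
by exists (findex (succ g) (Some i) None); rewrite iter_findex.
Qed.

Lemma reaches_root_succ g i k : g i = Some k -> reaches_root g i = reaches_root g k.
Proof.
move=> gi; apply/reaches_rootP/reaches_rootP => [[[|m] //] | [m k_m]].
  by rewrite iterSr /= gi; exists m.
by exists m.+1; rewrite iterSr /= gi.
Qed.

Lemma reaches_root_None g i : g i = None -> reaches_root g i.
Proof. by move=> gi; apply/reaches_rootP; exists 1%N; rewrite /= gi. Qed.

Lemma sub_acyclic g g' :
  acyclic g -> (forall i, g' i = g i \/ g' i = None) -> acyclic g'.
Proof.
move=> /forallP g_acyc g'_g; apply/forallP => x.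
have /reaches_rootP [m] := g_acyc x; elim: m x => [|m IHm] x //.
rewrite iterSr /=; case: (g'_g x) => [g'x | /reaches_root_None //].
case gx: (g x) => [x'|] x'_m; last by apply: reaches_root_None; rewrite g'x.
by rewrite (reaches_root_succ (etrans g'x gx)); apply: IHm.
Qed.

Lemma acyclic_succ_neq g i : acyclic g -> g i != Some i.
Proof.
move=> /forallP /(_ i) /reaches_rootP [m]; apply: contraPneq => gi.
suff -> : iter m (succ g) (Some i) = Some i by [].
by elim: m => //= m ->; rewrite /= gi.
Qed.

(* Following [g] from a vertex moved by [s] never leaves the support of [s]. *)
Lemma acyclic_perm_eq1 g (s : 'S_n) : acyclic g ->
  (forall i, s i != i -> g i = Some (s i)) -> s = 1%g.
Proof.
move=> /forallP g_acyc g_s; apply/permP => i0; rewrite perm1.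
case: (eqVneq (s i0) i0) => // s_i0; have /reaches_rootP [m] := g_acyc i0.
suff [y [-> _]] : exists y, iter m (succ g) (Some i0) = Some y /\ s y != y by [].
elim: m => [|m [y [i0_y s_y]]]; first by exists i0.
by exists (s y); rewrite iterS i0_y /= g_s // (inj_eq perm_inj).
Qed.

Definition root_of g x :=
  odflt x [pick y | fconnect (succ g) (Some x) (Some y) && (g y == None)].

Lemma succ_connect g x y : g x = Some y -> fconnect (succ g) (Some x) (Some y).
Proof. by move=> gx; rewrite -gx (fconnect1 (succ g) (Some x)). Qed.

Lemma root_ofP g x : reaches_root g x ->
  fconnect (succ g) (Some x) (Some (root_of g x)) /\ g (root_of g x) = None.
Proof.
have last_root m z : iter m (succ g) (Some z) = None ->
    exists2 y, fconnect (succ g) (Some z) (Some y) & g y = None.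
  elim: m z => [|m IHm] z //; rewrite iterSr /=.
  case gz: (g z) => [z'|] z'_m; last by exists z.
  have [y z'y gy] := IHm z' z'_m; exists y => //.
  exact: connect_trans (succ_connect gz) z'y.
move=> /reaches_rootP [m /last_root [y xy gy]]; rewrite /root_of.
by case: pickP => [z /andP [xz /eqP gz] // | /(_ y)]; rewrite xy gy eqxx.
Qed.

Lemma root_of_uniq g x y y' :
  fconnect (succ g) (Some x) (Some y) -> g y = None ->
  fconnect (succ g) (Some x) (Some y') -> g y' = None -> y = y'.
Proof.
have past_root a b z : iter a (succ g) (Some x) = Some z -> g z = None ->
    (a < b)%N -> iter b (succ g) (Some x) = None.
  move=> x_a gz ab; rewrite -(subnK (ltnW ab)) iterD x_a.
  case ba: (b - a)%N => [|m]; first by move: ab; rewrite -subn_gt0 ba.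
  by rewrite iterSr /= gz iter_succ_None.
move=> /iter_findex x_a gy /iter_findex x_b gy'.
case: (ltngtP (findex (succ g) (Some x) (Some y)) (findex (succ g) (Some x) (Some y'))).
- by move/(past_root _ _ _ x_a gy); rewrite x_b.
- by move/(past_root _ _ _ x_b gy'); rewrite x_a.
- by move=> eq_ab; move: x_a; rewrite eq_ab x_b => [[]].
Qed.

Lemma card_succ_Some g : #|[set r | g r != None]| = (n - #|[set r | g r == None]|)%N.
Proof.
rewrite cardsCs card_ord; congr (_ - #|pred_of_set _|)%N.
by apply/setP => r; rewrite !inE negbK.
Qed.

Definition nroots_but j g := #|[set r | (r != j) && (g r == None)]|.

Definition prune j g : {ffun 'I_n -> option 'I_n} :=
  [ffun r => if r == j then None else g r].

Lemma card_roots_prune j g : #|[set r | prune j g r == None]| = (nroots_but j g).+1.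
Proof.
have -> : [set r | prune j g r == None] = j |: [set r | (r != j) && (g r == None)].
  by apply/setP => r; rewrite !inE ffunE; case: (r == j).
by rewrite cardsU1 inE eqxx.
Qed.

Lemma acyclic_prune j g : acyclic g -> acyclic (prune j g).
Proof. by move/sub_acyclic; apply => r; rewrite ffunE; case: eqP; [right | left]. Qed.

End SuccessorMaps.

Section RowExpansion.
Variable n : nat.
Implicit Types (g : {ffun 'I_n -> option 'I_n}) (i j r c : 'I_n).

Lemma sumr_delta (S : pzSemiRingType) (F : 'I_n -> S) i :
  \sum_c F c * (c == i)%:R = F i.
Proof.
by rewrite (bigD1 i) //= eqxx mulr1 big1 ?addr0 // => c /negPf ->; rewrite mulr0.
Qed.

Lemma sum_option (S : nmodType) (F : option 'I_n -> S) :
  \sum_o F o = F None + \sum_k F (Some k).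
Proof.
rewrite (bigD1 None) //=; congr (_ + _).
rewrite (reindex_omap Some id) //=; last by case.
by apply: eq_bigl => k; rewrite eqxx.
Qed.

Lemma det_sum_rows (S : comPzRingType) (C : finType) (a : 'I_n -> C -> S)
    (b : 'I_n -> C -> 'I_n -> S) :
  \det (\matrix_(r, c) \sum_o a r o * b r o c) =
  \sum_(g : {ffun 'I_n -> C}) (\prod_r a r (g r)) * \det (\matrix_(r, c) b r (g r) c).
Proof.
rewrite /determinant; under eq_bigr => s _.
  rewrite (eq_bigr (fun r => \sum_o a r o * b r o (s r))) => [|r _]; last by rewrite mxE.
  rewrite bigA_distr_bigA big_distrr; over.
rewrite exchange_big; apply: eq_bigr => g _ /=; rewrite big_distrr; apply: eq_bigr => s _.
rewrite big_split mulrCA; congr (_ * (_ * _)).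
by apply: eq_bigr => r _; rewrite mxE.
Qed.

Lemma cofactor_row_delta (S : comPzRingType) (A : 'M[S]_n) i j :
  cofactor A j i = \det (\matrix_(r, c) if r == j then (c == i)%:R else A r c).
Proof.
set B := \matrix_(r, c) _; rewrite (expand_det_row B j) (bigD1 i) //= big1 => [|c c_i].
  rewrite mxE !eqxx mul1r addr0 /cofactor; congr (_ * \det _).
  by apply/matrixP => r c; rewrite !mxE eq_sym (negPf (neq_lift j r)).
by rewrite mxE eqxx (negPf c_i) mul0r.
Qed.

Definition edge_row (S : pzRingType) (o : option 'I_n) r c : S :=
  if o is Some k then (c == r)%:R - (c == k)%:R else (c == r)%:R.

Definition edge_mx (S : pzRingType) g : 'M[S]_n := \matrix_(r, c) edge_row S (g r) r c.

Lemma det_edge_mx_acyclic (S : idomainType) g : acyclic g -> \det (edge_mx S g) = 1.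
Proof.
move=> g_acyc; rewrite /determinant (bigD1 1%g) //=.
rewrite [X in _ + X]big1 ?addr0 => [|s s_neq1].
  rewrite odd_perm1 expr0 mul1r big1 // => i _; rewrite !mxE perm1 /edge_row.
  case gi: (g i) => [k|]; last by rewrite eqxx.
  have k_i : k != i.
    by apply: contraNneq (acyclic_succ_neq i g_acyc) => ki; rewrite gi ki.
  by rewrite eqxx eq_sym (negPf k_i) subr0.
have [i /andP [s_i g_i]] : exists i, (s i != i) && (g i != Some (s i)).
  apply/existsP; apply: contraR s_neq1 => /existsPn no_i.
  apply/eqP/(acyclic_perm_eq1 g_acyc) => i s_i.
  by have := no_i i; rewrite s_i /= negbK => /eqP.
rewrite (bigD1 i) //= !mxE /edge_row (negPf s_i).
case: (g i) g_i => [k|_]; last by rewrite mul0r mulr0.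
by rewrite (inj_eq Some_inj) eq_sym => /negPf ->; rewrite subrr mul0r mulr0.
Qed.

(* The indicator of the vertices that never reach a root is in the left kernel. *)
Lemma det_edge_mx_cyclic (S : idomainType) g : ~~ acyclic g -> \det (edge_mx S g) = 0.
Proof.
move=> /forallPn [r0 r0_loops]; apply/eqP; rewrite -det_tr; apply/det0P.
exists (\row_c (~~ reaches_root g c)%:R).
  by apply/eqP => /matrixP /(_ 0 r0); rewrite !mxE r0_loops => /eqP; rewrite oner_eq0.
apply/matrixP => z i; rewrite !mxE; under eq_bigr do rewrite !mxE.
rewrite /edge_row; case gi: (g i) => [k|].
  under eq_bigr do rewrite mulrBr.
  by rewrite sumrB !sumr_delta (reaches_root_succ gi) subrr.
by rewrite sumr_delta (reaches_root_None gi).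
Qed.

Lemma det_edge_mx (S : idomainType) g : \det (edge_mx S g) = (acyclic g)%:R.
Proof.
by case: (boolP (acyclic g)) => [/det_edge_mx_acyclic | /det_edge_mx_cyclic].
Qed.

End RowExpansion.

Section LaplacianExpansion.
Variable n : nat.
Implicit Types (g : {ffun 'I_n -> option 'I_n}) (i j r c : 'I_n).

Definition lapmx (S : pzRingType) (V : 'M[S]_n) : 'M[S]_n :=
  \matrix_(i, j) (if i == j then \sum_(k | k != i) V i k else - V i j).

Lemma map_lapmx (S S' : pzRingType) (f : {rmorphism S -> S'}) (V : 'M[S]_n) :
  map_mx f (lapmx V) = lapmx (map_mx f V).
Proof.
apply/matrixP => i j; rewrite !mxE; case: (i == j); rewrite ?rmorphN ?rmorph_sum //.
by apply: eq_bigr => k _; rewrite mxE.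
Qed.

Definition forest_weight (S : pzRingType) (V : 'M[S]_n) g : S :=
  \prod_r (if g r is Some k then V r k else 1).

(* Row [j] of the matrix whose determinant is the [(j, i)] cofactor is
   [e_i = e_j - (e_j - e_i)]; the last factor accounts for this. *)
Definition cofactor_weight (S : pzRingType) (V : 'M[S]_n) i j g : S :=
  (\prod_(r | r != j) (if g r is Some k then V r k else 1)) *
  (if g j is Some k then - (k == i)%:R else 1).

Lemma prod_option_exp (S : comPzRingType) g (P : pred 'I_n) (F : 'I_n -> 'I_n -> S) x :
  \prod_(r | P r) (if g r is Some k then F r k else x) =
  x ^+ #|[set r | P r && (g r == None)]| *
  \prod_(r | P r) (if g r is Some k then F r k else 1).
Proof.
rewrite (bigID (fun r => g r == None)) [X in _ = _ * X](bigID (fun r => g r == None)) /=.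
rewrite [X in _ = _ * (X * _)]big1 => [|r /andP [_ /eqP ->] //].
rewrite mul1r -prodr_const; congr (_ * _).
  by apply: eq_big => [r | r /andP [_ /eqP ->]]; rewrite ?inE.
by apply: eq_bigr => r /andP [_]; case: (g r).
Qed.

Lemma scalar_add_lapmx (S : comPzRingType) (x : S) V :
  x%:M + lapmx V =
  \matrix_(r, c) \sum_o (if o is Some k then V r k else x) * edge_row S o r c.
Proof.
apply/matrixP => r c; rewrite !mxE sum_option /=.
under [X in _ = _ + X]eq_bigr => k _ do rewrite mulrBr (eq_sym c k).
rewrite sumrB sumr_delta; case: (eqVneq c r) => [->|cr].
  rewrite mulr1 mulr1n; congr (_ + _).
  under [X in _ = X - _]eq_bigr do rewrite mulr1.
  by rewrite [X in _ = X - _](bigD1 r) //= addrC addrK.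
rewrite mulr0 mulr0n !add0r big1 ?sub0r // => k _.
by rewrite mulr0.
Qed.

Lemma cofactor_weight_prune (S : comPzRingType) (V : 'M[S]_n) i j g :
  cofactor_weight V i j g =
  forest_weight V (prune j g) * (if g j is Some k then - (k == i)%:R else 1).
Proof.
rewrite /forest_weight (bigD1 j) //= ffunE eqxx mul1r; congr (_ * _).
by apply: eq_bigr => r /negPf; rewrite ffunE => ->.
Qed.

Lemma forest_weight_map (S S' : comPzRingType) (f : {rmorphism S -> S'}) (V : 'M[S]_n) g :
  forest_weight (map_mx f V) g = f (forest_weight V g).
Proof.
by rewrite rmorph_prod; apply: eq_bigr => r _; case: (g r) => [k|]; rewrite ?mxE ?rmorph1.
Qed.

Lemma cofactor_weight_map (S S' : comPzRingType) (f : {rmorphism S -> S'}) (V : 'M[S]_n)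
    i j g :
  cofactor_weight (map_mx f V) i j g = f (cofactor_weight V i j g).
Proof.
rewrite !cofactor_weight_prune forest_weight_map rmorphM; congr (_ * _).
by case: (g j) => [k|]; rewrite ?rmorphN ?rmorph_nat ?rmorph1.
Qed.

Lemma det_scalar_add_lapmx (S : idomainType) (x : S) V :
  \det (x%:M + lapmx V) =
  \sum_(g | acyclic g) x ^+ #|[set r | g r == None]| * forest_weight V g.
Proof.
rewrite scalar_add_lapmx det_sum_rows (big_mkcond (fun g => acyclic g)).
apply: eq_bigr => g _; rewrite det_edge_mx; case: (acyclic g); last by rewrite mulr0.
by rewrite mulr1 (prod_option_exp g xpredT).
Qed.

Lemma adj_scalar_add_lapmx (S : idomainType) (x : S) V i j :
  \adj (x%:M + lapmx V) i j =
  \sum_(g | acyclic g) x ^+ nroots_but j g * cofactor_weight V i j g.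
Proof.
rewrite mxE cofactor_row_delta.
pose a r (o : option 'I_n) : S :=
  if r == j then (if o is Some k then - (k == i)%:R else 1)
  else (if o is Some k then V r k else x).
transitivity (\det (\matrix_(r, c) \sum_o a r o * edge_row S o r c)).
  congr (\det _); apply/matrixP => r c; rewrite [LHS]mxE [RHS]mxE /a.
  case: (eqVneq r j) => [->|rj]; last by rewrite scalar_add_lapmx mxE.
  rewrite sum_option /= mul1r (bigD1 i) //= big1 ?addr0 => [|k /negPf ->]; last first.
    by rewrite mulr0n oppr0 mul0r.
  by rewrite eqxx mulr1n mulN1r opprB addrC subrK.
rewrite det_sum_rows (big_mkcond (fun g => acyclic g)); apply: eq_bigr => g _.
rewrite det_edge_mx; case: (acyclic g); last by rewrite mulr0.
rewrite mulr1 (bigD1 j) //= /a eqxx mulrC /cofactor_weight.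
rewrite (eq_bigr (fun r => if g r is Some k then V r k else x)) => [|r /negPf -> //].
by rewrite prod_option_exp mulrA.
Qed.

End LaplacianExpansion.

Section InForests.
Variables (R : realFieldType) (n : nat) (W : 'M[R]_n).
Implicit Types (g : {ffun 'I_n -> option 'I_n}) (F : {set 'I_n * 'I_n}) (i x y : 'I_n).

Definition arcs_of g : {set 'I_n * 'I_n} := [set a | g a.1 == Some a.2].
Definition succ_of F : {ffun 'I_n -> option 'I_n} := [ffun i => [pick k | (i, k) \in F]].
Definition positive_arcs g := [forall i, if g i is Some k then 0 < W i k else true].

Lemma arcs_ofE g : arcs_of g = (fun i => (i, odflt i (g i))) @: [set i | g i != None].
Proof.
apply/setP => [[u v]]; rewrite inE /=; apply/eqP/imsetP => [gu | [r]].
  by exists u; rewrite ?inE gu.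
by rewrite inE; case gr: (g r) => [k|] //= _ [-> ->].
Qed.

Lemma arcs_of_inj g :
  {in [set i | g i != None] &, injective (fun i => (i, odflt i (g i)))}.
Proof. by move=> u v _ _ [->]. Qed.

Lemma card_arcs_of g : #|arcs_of g| = #|[set i | g i != None]|.
Proof. by rewrite arcs_ofE card_in_imset //; apply: arcs_of_inj. Qed.

Lemma sg_weight_arcs_of g : sg_weight W (arcs_of g) = forest_weight W g.
Proof.
rewrite /sg_weight arcs_ofE big_imset /=; last exact: arcs_of_inj.
by rewrite /forest_weight big_mkcond; apply: eq_bigr => r _ /=; rewrite inE; case: (g r).
Qed.

Lemma outdeg_arcs_of g i : outdeg (arcs_of g) i = (g i != None).
Proof.
rewrite /outdeg; case gi: (g i) => [k|] /=.
  suff -> : [set a in arcs_of g | a.1 == i] = [set (i, k)] by rewrite cards1.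
  apply/setP => [[u v]]; rewrite !inE /=; apply/andP/eqP => [[/eqP gu /eqP ui] | [-> ->]].
    by move: gu; rewrite ui gi => [[->]].
  by rewrite gi.
suff -> : [set a in arcs_of g | a.1 == i] = set0 by rewrite cards0.
apply/setP => [[u v]]; rewrite !inE /=; apply/andP => [[/eqP gu /eqP ui]].
by rewrite ui gi in gu.
Qed.

Lemma ntrees_arcs_of g : ntrees (arcs_of g) = #|[set i | g i == None]|.
Proof.
by congr #|pred_of_set _|; apply/setP => r; rewrite !inE outdeg_arcs_of; case: (g r).
Qed.

Lemma arcs_ofK : cancel arcs_of succ_of.
Proof.
move=> g; apply/ffunP => i; rewrite ffunE; case: pickP => [k | no_k] /=.
  by rewrite inE /= => /eqP.
by case gi: (g i) => [k|] //; have := no_k k; rewrite inE /= gi eqxx.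
Qed.

Lemma succ_ofK F : [forall x, outdeg F x <= 1]%N -> arcs_of (succ_of F) = F.
Proof.
move=> /forallP F_out; apply/setP => [[u v]]; rewrite inE ffunE /=.
case: pickP => [k uk | no_k]; last by rewrite no_k.
apply/eqP/idP => [[<-] // | uv].
have /card_le1_eqP /(_ (u, k) (u, v)) := F_out u.
by rewrite !inE /= uk uv eqxx => /(_ isT isT) [->].
Qed.

Lemma arcs_of_positive g : [forall a in arcs_of g, is_arc W a] = positive_arcs g.
Proof.
apply/forallP/forallP => [g_pos i | g_pos a].
  by case gi: (g i) => [k|] //; have := g_pos (i, k); rewrite inE /= gi eqxx.
by apply/implyP; rewrite inE => /eqP ga; have := g_pos a.1; rewrite ga.
Qed.

Lemma weak_adj_arcs_of g x y :
  weak_adj (arcs_of g) x y = (g x == Some y) || (g y == Some x).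
Proof. by rewrite /weak_adj !inE. Qed.

Lemma reaches_root_closed g : closed (weak_adj (arcs_of g)) (reaches_root g).
Proof.
move=> x y; rewrite weak_adj_arcs_of => /orP [] /eqP g_xy; rewrite !unfold_in.
  exact: reaches_root_succ.
exact/esym/reaches_root_succ.
Qed.

Lemma root_of_root g y : g y = None -> root_of g y = y.
Proof.
move=> gy; have [yr gr] := root_ofP (reaches_root_None gy).
exact: root_of_uniq yr gr (connect0 _ _) gy.
Qed.

Lemma root_of_weak_adj g x y :
  acyclic g -> weak_adj (arcs_of g) x y -> root_of g x = root_of g y.
Proof.
move=> /forallP g_acyc; have [xr gxr] := root_ofP (g_acyc x).
have [yr gyr] := root_ofP (g_acyc y).
rewrite weak_adj_arcs_of => /orP [] /eqP g_xy.
  exact: root_of_uniq xr gxr (connect_trans (succ_connect g_xy) yr) gyr.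
exact: esym (root_of_uniq yr gyr (connect_trans (succ_connect g_xy) xr) gxr).
Qed.

Lemma fconnect_succ_weak g x y :
  fconnect (succ g) (Some x) (Some y) -> connect (weak_adj (arcs_of g)) x y.
Proof.
move=> /iter_findex; move: (findex _ _ _) => m.
elim: m x => [|m IHm] x; first by move=> [->].
rewrite iterSr /=; case gx: (g x) => [x'|]; last by rewrite iter_succ_None.
move=> /IHm; apply: connect_trans; apply: connect1.
by rewrite weak_adj_arcs_of gx eqxx.
Qed.

Lemma weak_components_arcs_of g :
  [forall x, (outdeg (arcs_of g) x <= 1)%N &&
     (#|[set y | connect (weak_adj (arcs_of g)) x y & outdeg (arcs_of g) y == 0%N]|
       == 1%N)]
  = acyclic g.
Proof.
apply/forallP/idP => [comp_g | g_acyc x].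
  apply/forallP => x; have /andP [_ /cards1P [y x_root]] := comp_g x.
  have : y \in [set y | connect (weak_adj (arcs_of g)) x y & outdeg (arcs_of g) y == 0%N].
    by rewrite x_root set11.
  rewrite inE outdeg_arcs_of eqb0 negbK => /andP [xy /eqP gy].
  have := closed_connect (@reaches_root_closed g) xy.
  rewrite !unfold_in /reaches_root => ->.
  exact: reaches_root_None.
rewrite outdeg_arcs_of leq_b1 /=; apply/cards1P; exists (root_of g x).
apply/setP => y; rewrite !inE outdeg_arcs_of eqb0 negbK.
apply/andP/eqP => [[xy /eqP gy] | ->].
  pose same_root := [pred z | root_of g z == root_of g x].
  have same_root_closed : closed (weak_adj (arcs_of g)) same_root.
    by move=> u v /(root_of_weak_adj g_acyc) uv; rewrite !inE uv.
  have := closed_connect same_root_closed xy; rewrite !inE eqxx root_of_root //.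
  by move=> /esym /eqP.
have [xr gr] := root_ofP (forallP g_acyc x).
by rewrite gr; split; first exact: fconnect_succ_weak.
Qed.

Lemma inforest_arcs_of g : is_inforest W (arcs_of g) = positive_arcs g && acyclic g.
Proof. by rewrite /is_inforest arcs_of_positive weak_components_arcs_of. Qed.

Lemma forest_weight_eq0 (W_ge0 : forall i j, 0 <= W i j) g :
  ~~ positive_arcs g -> forest_weight W g = 0.
Proof.
move=> /forallPn [i]; case gi: (g i) => [k|] // Wik.
rewrite /forest_weight (bigD1 i) //= gi.
have -> : W i k = 0 by apply/eqP; rewrite eq_le W_ge0 andbT leNgt.
by rewrite mul0r.
Qed.

Lemma sigma_acyclic (W_ge0 : forall i j, 0 <= W i j) k :
  sigma W k = \sum_(g | acyclic g && (#|[set i | g i != None]| == k)) forest_weight W g.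
Proof.
rewrite /sigma (reindex_onto arcs_of succ_of) /=; last first.
  move=> F /andP [/andP [_ /forallP F_comp] _]; apply: succ_ofK.
  by apply/forallP => x; case/andP: (F_comp x).
rewrite [RHS](bigID (positive_arcs)) /= [X in _ = _ + X]big1 ?addr0 => [|g /andP [_]].
  apply: eq_big => [g | g _]; last exact: sg_weight_arcs_of.
  rewrite arcs_ofK eqxx andbT inforest_arcs_of card_arcs_of.
  by case: (positive_arcs g); rewrite ?andbT ?andbF.
exact: forest_weight_eq0.
Qed.

Lemma empty_inforest : is_inforest W (arcs_of [ffun=> None]).
Proof.
rewrite inforest_arcs_of; apply/andP; split; apply/forallP => i; first by rewrite ffunE.
by apply: reaches_root_None; rewrite ffunE.
Qed.

Lemma ntrees_le F : (ntrees F <= n)%N.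
Proof. by apply: leq_trans (max_card _) _; rewrite card_ord. Qed.

Lemma ntrees_inforest_gt0 F : (0 < n)%N -> is_inforest W F -> (0 < ntrees F)%N.
Proof.
move=> n_gt0 /andP [_ /forallP /(_ (Ordinal n_gt0)) /andP [_ /cards1P [y roots_y]]].
have : y \in [set y | connect (weak_adj F) (Ordinal n_gt0) y & outdeg F y == 0%N].
  by rewrite roots_y set11.
by rewrite inE => /andP [_ y_root]; apply/card_gt0P; exists y; rewrite inE.
Qed.

Lemma inforest_dimE : inforest_dim W = \big[Order.min/n]_(F | is_inforest W F) ntrees F.
Proof. by rewrite /inforest_dim minEnat. Qed.

Lemma inforest_dim_le F : is_inforest W F -> (inforest_dim W <= ntrees F)%N.
Proof. by move=> F_forest; rewrite inforest_dimE -leEnat bigmin_le_cond. Qed.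

Lemma inforest_dim_attained : exists2 F, is_inforest W F & ntrees F = inforest_dim W.
Proof.
rewrite inforest_dimE.
have [F F_forest ->] := eq_bigmin _ _ (@ntrees n) empty_inforest (fun F _ => ntrees_le F).
by exists F.
Qed.

Lemma inforest_dim_bounds : (0 < n)%N -> (0 < inforest_dim W <= n)%N.
Proof.
move=> n_gt0; have [F F_forest <-] := inforest_dim_attained.
by rewrite ntrees_le ntrees_inforest_gt0.
Qed.

End InForests.

Lemma sum_antidiagonals (V : nmodType) (F : nat -> nat -> V) N :
  \sum_(m < N.+1) \sum_(j < m.+1) F j (m - j)%N =
  \sum_(k < N.+1) \sum_(j < (N - k).+1) F j k.
Proof.
elim: N => [|N IHN]; first by rewrite !big_ord1.
rewrite big_ord_recr /= IHN [RHS]big_ord_recr /= subnn big_ord1.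
have -> : \sum_(k < N.+1) \sum_(j < (N.+1 - k).+1) F j k =
    \sum_(k < N.+1) \sum_(j < (N - k).+1) F j k + \sum_(k < N.+1) F (N.+1 - k)%N k.
  rewrite -big_split /=; apply: eq_bigr => k _.
  by rewrite subSn ?big_ord_recr // -ltnS.
rewrite -addrA; congr (_ + _); rewrite big_ord_recl /= subn0 addrC; congr (_ + _).
rewrite (reindex_inj rev_ord_inj) /=; apply: eq_bigr => k _.
by rewrite /bump leq0n add1n; congr (F _ _); have := ltn_ord k; lia.
Qed.

Lemma exprZ_mx (S : comPzRingType) n (c : S) (A : 'M[S]_n) k :
  (c *: A) ^+ k = c ^+ k *: A ^+ k.
Proof.
elim: k => [|k IHk]; first by rewrite !expr0 scale1r.
by rewrite !exprS IHk -!mulmxE -scalemxAr !scalemxAl scalerA mulrC.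
Qed.

Lemma regroup_scaled_powers (K : fieldType) n (A : 'M[K]_n) (c : nat -> K) (x : K) N p :
  x != 0 -> (N < p)%N ->
  \sum_(m < N.+1) x ^+ (p - m.+1) *: \sum_(j < m.+1) c j *: A ^+ (m - j)%N =
  \sum_(k < N.+1) (\sum_(j < (N - k).+1) c j * x ^+ (p - j - 1)) *: (x^-1 *: A) ^+ k.
Proof.
move=> x_neq0 N_lt_p; pose F j k := (c j * x ^+ (p - 1 - j - k)) *: A ^+ k.
transitivity (\sum_(m < N.+1) \sum_(j < m.+1) F j (m - j)%N).
  apply: eq_bigr => m _; rewrite scaler_sumr; apply: eq_bigr => j _.
  rewrite scalerA mulrC /F; congr (_ * x ^+ _ *: _).
  by have := ltn_ord j; have := ltn_ord m; lia.
rewrite sum_antidiagonals; apply: eq_bigr => k _; rewrite scaler_suml.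
apply: eq_bigr => j _; rewrite exprZ_mx scalerA /F -mulrA exprVn; congr (_ * _ *: _).
have jk_le : (k <= p - j - 1)%N by have := ltn_ord j; have := ltn_ord k; lia.
rewrite -[in RHS](subnK jk_le) exprD mulfK ?expf_neq0 //; congr (x ^+ _); lia.
Qed.

Section AdjugateCoefficients.
Variables (R : realFieldType) (n : nat) (W : 'M[R]_n).
Hypothesis W_ge0 : forall i j : 'I_n, 0 <= W i j.
Implicit Types (g : {ffun 'I_n -> option 'I_n}) (i j : 'I_n).

Local Notation L := (laplacian W).
Local Notation d := (inforest_dim W).

Definition adj_coef t : 'M[R]_n :=
  \matrix_(i, j) \sum_(g | acyclic g && (nroots_but j g == t)) cofactor_weight W i j g.

Lemma nroots_but_lt j g : (nroots_but j g < n)%N.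
Proof.
have : (nroots_but j g <= #|[set~ j]|)%N.
  by apply: subset_leq_card; apply/subsetP => r; rewrite !inE => /andP [].
by rewrite cardsC1 card_ord; have := ltn_ord j; lia.
Qed.

Lemma adj_coef_ge t : (n <= t)%N -> adj_coef t = 0.
Proof.
move=> n_le_t; apply/matrixP => i j; rewrite !mxE big1 // => g /andP [_ /eqP roots_t].
by have := nroots_but_lt j g; rewrite roots_t ltnNge n_le_t.
Qed.

Lemma adj_scalar_add_laplacian (x : R) :
  \adj (x%:M + L) = \sum_(t < n) x ^+ t *: adj_coef t.
Proof.
apply/matrixP => i j; rewrite adj_scalar_add_lapmx summxE.
rewrite (partition_big (fun g => Ordinal (nroots_but_lt j g)) xpredT) //=.
apply: eq_bigr => t _; rewrite !mxE big_distrr /=.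
by apply: eq_big => [g | g /andP [_ /eqP <-]].
Qed.

Lemma char_poly_mx_oppL : char_poly_mx (- L) = 'X%:M + lapmx (map_mx polyC W).
Proof. by rewrite /char_poly_mx map_mxN opprK map_lapmx. Qed.

Lemma char_poly_mx_oppL_mxE i k :
  char_poly_mx (- L) i k = 'X *+ (i == k) + (L i k)%:P.
Proof. by rewrite !mxE polyCN opprK. Qed.

Lemma coef_char_poly_oppL t : (t <= n)%N -> (char_poly (- L))`_t = sigma W (n - t).
Proof.
move=> t_le_n; rewrite /char_poly char_poly_mx_oppL det_scalar_add_lapmx coef_sum.
rewrite sigma_acyclic // big_mkcondr /=; apply: eq_bigr => g _.
rewrite forest_weight_map mulrC mul_polyC coefZ coefXn card_succ_Some.
have roots_le_n : (#|[set r | g r == None]| <= n)%N.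
  by apply: leq_trans (max_card _) _; rewrite card_ord.
have -> : (n - #|[set r | g r == None]| == n - t)%N = (#|[set r | g r == None]| == t).
  by apply/eqP/eqP; lia.
by rewrite eq_sym; case: (_ == t); rewrite ?mulr1 ?mulr0.
Qed.

Lemma coef_adj_char_poly_mx t i j :
  ((\adj (char_poly_mx (- L))) i j)`_t = adj_coef t i j.
Proof.
rewrite char_poly_mx_oppL adj_scalar_add_lapmx coef_sum mxE big_mkcondr /=.
apply: eq_bigr => g _; rewrite cofactor_weight_map mulrC mul_polyC coefZ coefXn.
by rewrite eq_sym; case: (_ == t); rewrite ?mulr1 ?mulr0.
Qed.

Lemma coefS_XmulnDC_mul (b : bool) (c : R) (q : {poly R}) t :
  (('X *+ b + c%:P) * q)`_t.+1 = q`_t *+ b + c * q`_t.+1.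
Proof. by rewrite mulrDl coefD mulrnAl coefMn coefXM coefCM. Qed.

(* The coefficient of [X^(t+1)] in [(X I + L) adj (X I + L) = char_poly (-L) I]. *)
Lemma adj_coef_rec t :
  (t < n)%N -> adj_coef t + L *m adj_coef t.+1 = (sigma W (n - t.+1))%:M.
Proof.
move=> t_lt_n; apply/matrixP => i j.
have := congr1 (fun M : 'M[{poly R}]_n => (M i j)`_t.+1)
  (mul_mx_adj (char_poly_mx (- L))).
rewrite /= [in X in X = _ -> _]mxE [in X in _ = X -> _]mxE coef_sum coefMn.
rewrite coef_char_poly_oppL //.
under eq_bigr do rewrite char_poly_mx_oppL_mxE coefS_XmulnDC_mul !coef_adj_char_poly_mx.
rewrite big_split /= => coef_ij; rewrite [RHS]mxE -coef_ij [LHS]mxE [X in _ + X]mxE.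
congr (_ + _); rewrite (bigD1 i) //= eqxx mulr1n big1 ?addr0 // => k /negPf.
by rewrite eq_sym => ->; rewrite mulr0n.
Qed.

Lemma adj_coef_lt_dim t : (t.+1 < d)%N -> adj_coef t = 0.
Proof.
move=> t_lt_d; apply/matrixP => i j.
rewrite !mxE big1 // => g /andP [g_acyc /eqP roots_t].
rewrite cofactor_weight_prune.
have [pos | /(forest_weight_eq0 W_ge0) ->] := boolP (positive_arcs W (prune j g)).
  2: by rewrite mul0r.
have := @inforest_dim_le _ _ W (arcs_of (prune j g)).
rewrite inforest_arcs_of pos acyclic_prune // ntrees_arcs_of card_roots_prune roots_t.
by move=> /(_ isT); rewrite leqNgt t_lt_d.
Qed.

Lemma adj_coef_closed m :
  (m < n)%N -> adj_coef (n - m.+1)%N = \sum_(j < m.+1) sigma W j *: (- L) ^+ (m - j)%N.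
Proof.
elim: m => [|m IHm] m_lt_n.
  have := adj_coef_rec (t := n.-1) ltac:(lia).
  rewrite (adj_coef_ge (t := n.-1.+1)) ?mulmx0 ?addr0; last by lia.
  rewrite big_ord1 subnn expr0 scalemx1 (_ : n - 1 = n.-1)%N; last by lia.
  by rewrite (_ : n - n.-1.+1 = 0)%N //; lia.
have := adj_coef_rec (t := (n - m.+2)%N) ltac:(lia).
rewrite (_ : (n - m.+2).+1 = n - m.+1)%N ?IHm; [|lia|lia].
move=> /(canRL (addrK _)) ->; rewrite (_ : n - (n - m.+1) = m.+1)%N; last by lia.
rewrite [RHS]big_ord_recr /= subnn expr0 scalemx1 addrC -mulNmx mulmx_sumr.
congr (_ + _); apply: eq_bigr => k _; rewrite -scalemxAr.
by rewrite subSn ?exprS ?mulmxE // -ltnS.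
Qed.

Hypothesis n_gt0 : (0 < n)%N.

Lemma adj_scalar_add_laplacian_sigma (x : R) :
  \adj (x%:M + L) =
  \sum_(m < (n - d).+1)
    x ^+ (n - m.+1)%N *: \sum_(j < m.+1) sigma W j *: (- L) ^+ (m - j)%N.
Proof.
have /andP [d_gt0 d_le_n] := inforest_dim_bounds W n_gt0.
pose G m := x ^+ (n - m.+1) *: adj_coef (n - m.+1)%N.
rewrite adj_scalar_add_laplacian (reindex_inj rev_ord_inj) /=.
rewrite (bigID (fun m : 'I_n => (m < (n - d).+1)%N)) /=.
rewrite [X in _ + X]big1 => [|m]; last first.
  rewrite -leqNgt => m_gt; rewrite adj_coef_lt_dim ?scaler0 //.
  by have := ltn_ord m; lia.
rewrite addr0 -(big_ord_widen _ G) /G; last by lia.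
by apply: eq_bigr => m _; rewrite adj_coef_closed //; have := ltn_ord m; lia.
Qed.

End AdjugateCoefficients.

Theorem corollary4 (R : realFieldType) (n : nat) (W : 'M[R]_n)
  (hn : (1 < n)%N)
  (hloop : forall i : 'I_n, W i i = 0)
  (hnonneg : forall i j : 'I_n, 0 <= W i j)
  (lam : R) (hlam : lam != 0) :
  \adj (lam%:M + laplacian W) =
  \sum_(k < (n - inforest_dim W).+1)
     s' W (n - inforest_dim W - k) lam *: (- (lam^-1 *: laplacian W)) ^+ k.
Proof.
have n_gt0 : (0 < n)%N by apply: ltnW.
have /andP [d_gt0 _] := inforest_dim_bounds W n_gt0.
rewrite adj_scalar_add_laplacian_sigma // regroup_scaled_powers //; last by lia.
by apply: eq_bigr => k _; rewrite -scalerN.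
Qed.
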